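(* Let $G$ be an interval graph with a fixed interval representation, and let $P_1,\ldots,P_\ell$ be a solution of an instance of \textsc{Requirement Induced Disjoint Paths} on $G$ with terminal pairs $(s_1,t_1),\ldots,(s_k,t_k)$. For each $P_a$ that has at least one inner vertex, let $I_{P_a}$ be the union of the intervals of the inner vertices of $P_a$, and say $I_{P_a}$ has color $i$ if $P_a$ joins the vertices representing $s_i$ and $t_i$. Then: (i) for every $i$, every $I_{P_a}$ of color $i$ intersects the intervals of the vertices representing $s_i$ and $t_i$, and intersects no interval of any other terminal vertex; (ii) for distinct $a,b$ (with $P_a,P_b$ having inner vertices), $I_{P_a}\cap I_{P_b}=\emptyset$; (iii) for colors $i\neq j$, there is no interval $I_{P_c}$ of color $j$ that lies between two intervals $I_{P_a},I_{P_b}$ of color $i$.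
   Context: All graphs are finite, undirected, without loops or multiple edges. For a path $P=v_1\cdots v_r$, the vertices $v_1,v_r$ are its ends and $v_2,\ldots,v_{r-1}$ its inner vertices. An edge $v_iv_j$ with $i+1<j$ is an inner chord of $P$ if $v_i$ or $v_j$ is an inner vertex of $P$. Distinct paths $P_1,\ldots,P_\ell$ are mutually induced if (i) no $P_i$ has an inner chord; (ii) two distinct paths $P_i,P_j$ share only vertices that are ends of both paths; (iii) no inner vertex $u$ of some $P_i$ is adjacent to a vertex $v$ of some $P_j$ with $j\neq i$, unless $v$ is an end of both $P_i$ and $P_j$. \textsc{Requirement Induced Disjoint Paths}: the input is a graph $G$, $k$ terminal pairs $(s_1,t_1),\ldots,(s_k,t_k)$ and positive integers $r_1,\ldots,r_k$. Each terminal is placed on (''represented by'') a vertex of $G$ (a terminal vertex); several terminals may be represented by the same vertex, but $s_i$ and $t_i$ are represented by distinct vertices, and the unordered pairs of representing vertices are pairwise distinct for different $i$. A solution is a family of $\ell=r_1+\cdots+r_k$ mutually induced paths such that, for each $i$, exactly $r_i$ of them join the vertex representing $s_i$ and the vertex representing $t_i$. An interval representation assigns each vertex $u$ an interval $[l_u,r_u]$ of the real line, all endpoints being distinct integers, such that two vertices are adjacent iff their intervals intersect. For intervals (or unions of intervals that are intervals) $X,Y,Z$, $Z$ lies between $X$ and $Y$ if the right end-point of $X$ is smaller than the left end-point of $Z$ and the right end-point of $Z$ is smaller than the left end-point of $Y$. *)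

From HB Require Import structures.
From mathcomp Require Import all_boot all_order all_algebra.
Set Implicit Arguments. Unset Strict Implicit. Unset Printing Implicit Defensive.
Import Order.TTheory GRing.Theory Num.Theory.
Local Open Scope ring_scope.

Section Defs.
Variable V : finType.

Definition simple_graph (e : rel V) : Prop :=
  irreflexive e /\ symmetric e.

Definition interval_rep (e : rel V) (l r : V -> int) : Prop :=
  [/\ forall u, l u < r u,
      forall u v, l u = l v -> u = v,
      forall u v, r u = r v -> u = v,
      forall u v, l u <> r v &
      forall u v, u != v -> e u v = (l u <= r v) && (l v <= r u)].

Definition gpath (e : rel V) (p : seq V) : bool :=
  if p is x :: q then path e x q && uniq p else false.

Definition is_end (p : seq V) (v : V) : bool :=
  if p is x :: q then (v == x) || (v == last x q) else false.

Definition inner (p : seq V) : seq V :=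
  if p is x :: q then behead (belast x q) else [::].

Definition joins (p : seq V) (x y : V) : bool :=
  if p is a :: q then ((a == x) && (last a q == y)) || ((a == y) && (last a q == x))
  else false.

Definition no_inner_chord (e : rel V) (p : seq V) : Prop :=
  forall (d : V) (i j : nat), (i.+1 < j)%N -> (j < size p)%N ->
    e (nth d p i) (nth d p j) -> i = 0%N /\ j = (size p).-1.

Definition mutually_induced (e : rel V) (n : nat) (P : 'I_n -> seq V) : Prop :=
  [/\ forall a, no_inner_chord e (P a),
      forall a b, a != b -> forall v, v \in P a -> v \in P b ->
        is_end (P a) v && is_end (P b) v &
      forall a b, a != b -> forall u v, u \in inner (P a) -> v \in P b ->
        e u v -> is_end (P a) v && is_end (P b) v].

Definition ridp_instance (k : nat) (s t : 'I_k -> V) (req : 'I_k -> nat) : Prop :=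
  [/\ forall i, s i != t i,
      forall i j, i != j ->
        ~~ (((s i == s j) && (t i == t j)) || ((s i == t j) && (t i == s j))) &
      forall i, (0 < req i)%N].

Definition ridp_solution (e : rel V) (k : nat) (s t : 'I_k -> V) (req : 'I_k -> nat)
    (P : 'I_(\sum_(i < k) req i)%N -> seq V) : Prop :=
  [/\ forall a, gpath e (P a),
      forall a b, a != b -> P a <> P b /\ P a <> rev (P b),
      mutually_induced e P &
      forall i, #|[set a | joins (P a) (s i) (t i)]| = req i].

Definition terminal_vertex (k : nat) (s t : 'I_k -> V) (v : V) : Prop :=
  exists j, v = s j \/ v = t j.

Definition meets_vertex (l r : V -> int) (p : seq V) (v : V) : Prop :=
  exists2 u, u \in inner p & (l u <= r v) && (l v <= r u).

Definition meets_union (l r : V -> int) (p q : seq V) : Prop :=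
  exists u, exists w, [/\ u \in inner p, w \in inner q & (l u <= r w) && (l w <= r u)].

(* I_z lies between I_x and I_y: right end of I_x < left end of I_z and
   right end of I_z < left end of I_y (right end = max of r over inner
   vertices, left end = min of l over inner vertices; unfolded). *)
Definition lies_between (l r : V -> int) (x z y : seq V) : Prop :=
  (forall u w, u \in inner x -> w \in inner z -> r u < l w) /\
  (forall w v, w \in inner z -> v \in inner y -> r w < l v).

End Defs.

Arguments ridp_solution {V} e {k} s t req P.

From HB Require Import structures.
From mathcomp Require Import all_boot all_order all_algebra.
Set Implicit Arguments. Unset Strict Implicit.
Import Order.TTheory GRing.Theory Num.Theory.
Local Open Scope ring_scope.

(* In an interval graph, adjacency is overlap of intervals, so mutual
   inducedness says exactly that the span I_P of the inner vertices of a path P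
   overlaps no interval of a vertex of another path, except at shared ends.
   Since a path with inner vertices leaves each end through an edge to an
   inner vertex, I_P meets both its terminals and (as every terminal pair is
   joined by some path) no other terminal vertex; and two spans are disjoint.
   For (iii): some terminal x of color i is not a terminal of color j; the
   spans of both paths of color i meet the interval of x, hence so does every
   span lying between them, which is impossible for a span of color j. *)

Section PathEnds.
Variable V : finType.
Implicit Types (p : seq V) (u v x y : V).

Lemma inner_rcons a q z : inner (a :: rcons q z) = q :> seq V.
Proof. by rewrite /= belast_rcons. Qed.

Lemma inner_neq0P p : inner p != [::] ->
  exists a q z, p = a :: rcons q z /\ q != [::].
Proof.
case: p => [|a q] //=; case/lastP: q => [|q z] //=.
by rewrite belast_rcons /= => q_neq0; exists a, q, z.
Qed.

Lemma mem_inner p u : u \in inner p -> u \in p.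
Proof.
move=> u_in; have /inner_neq0P[a [q [z [p_def _]]]] : inner p != [::].
  by case: (inner p) u_in.
by move: u_in; rewrite p_def inner_rcons in_cons mem_rcons in_cons => ->; rewrite !orbT.
Qed.

Lemma mem_end p v : is_end p v -> v \in p.
Proof. by case: p => [|a q] //= /orP[/eqP ->|/eqP ->]; rewrite ?mem_head ?mem_last. Qed.

Lemma gpath_uniq (e : rel V) p : gpath e p -> uniq p.
Proof. by case: p => // a q /andP[]. Qed.

Lemma inner_not_end p u : uniq p -> u \in inner p -> ~~ is_end p u.
Proof.
move=> uniq_p u_in; have /inner_neq0P[a [q [z [p_def _]]]] : inner p != [::].
  by case: (inner p) u_in.
move: uniq_p u_in; rewrite p_def inner_rcons /is_end last_rcons.
rewrite /= mem_rcons in_cons negb_or rcons_uniq => /andP[/andP[_ a_q] /andP[z_q _]] u_q.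
by apply/negP => /orP[] /eqP u_end; rewrite -u_end u_q in a_q z_q.
Qed.

Lemma joinsC p x y : joins p x y = joins p y x.
Proof. by case: p => [|a q] //=; rewrite orbC. Qed.

Lemma joins_is_end p x y : joins p x y -> is_end p x && is_end p y.
Proof.
case: p => [|a q] //= /orP[] /andP[/eqP <- /eqP <-]; by rewrite !eqxx ?orbT.
Qed.

Lemma joins_endP p x y v : joins p x y -> is_end p v -> v = x \/ v = y.
Proof.
case: p => [|a q] //= /orP[] /andP[/eqP <- /eqP <-]; by case/orP => /eqP ->; auto.
Qed.

Lemma joins_ends_eq p x y x' y' : joins p x y -> joins p x' y' ->
  ((x == x') && (y == y')) || ((x == y') && (y == x')).
Proof.
case: p => [|a q] //= /orP[] /andP[/eqP <- /eqP <-] /orP[] /andP[/eqP <- /eqP <-];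
  by rewrite !eqxx ?orbT.
Qed.

Lemma joins_adj_inner (e : rel V) p x y : symmetric e -> gpath e p ->
  joins p x y -> inner p != [::] -> exists2 u, u \in inner p & e x u.
Proof.
move=> e_sym g_p j_p /inner_neq0P[a [q [z [p_def q_neq0]]]].
move: g_p j_p; rewrite p_def inner_rcons /gpath /joins /= last_rcons rcons_path.
case: q q_neq0 {p_def} => [|b q] // _ /=.
case/andP=> /andP[/andP[e_ab _] e_last] _.
case/orP=> [/andP[/eqP <- _]|/andP[_ /eqP <-]].
- by exists b; rewrite ?mem_head.
- by exists (last b q); rewrite ?mem_last // e_sym.
Qed.

End PathEnds.

Lemma exists_private_end (T : eqType) (x y x' y' : T) : x != y ->
    ~~ (((x == x') && (y == y')) || ((x == y') && (y == x'))) ->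
  exists2 z, z = x \/ z = y & (z != x') && (z != y').
Proof.
move=> x_neq_y.
have [x_priv|] := boolP ((x != x') && (x != y')); first by exists x; auto.
have [y_priv|] := boolP ((y != x') && (y != y')); first by exists y; auto.
rewrite !negb_and !negbK => /orP[] /eqP y_eq /orP[] /eqP x_eq;
  by rewrite x_eq y_eq ?eqxx ?orbT in x_neq_y *.
Qed.

Section Overlap.
Context {d : Order.disp_t} {T : porderType d} {V : Type}.
Variables l r : V -> T.

Definition overlap u v := (l u <= r v)%O && (l v <= r u)%O.

Lemma overlapC u v : overlap u v = overlap v u.
Proof. by rewrite /overlap andbC. Qed.

Lemma overlap_between x u w v : overlap u x -> overlap v x ->
  (r u < l w)%O -> (l w < r w)%O -> (r w < l v)%O -> overlap w x.
Proof.
case/andP=> _ x_u /andP[v_x _] u_w w_w w_v; apply/andP; split.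
- exact: le_trans (ltW (lt_trans w_w w_v)) v_x.
- exact: le_trans x_u (ltW (lt_trans u_w w_w)).
Qed.

End Overlap.

Section Solution.
Variables (V : finType) (e : rel V) (l r : V -> int).
Variables (k : nat) (s t : 'I_k -> V) (req : 'I_k -> nat).
Variable P : 'I_(\sum_(i < k) req i)%N -> seq V.
Hypotheses (e_simple : simple_graph e) (lr_rep : interval_rep e l r).
Hypotheses (inst : ridp_instance s t req) (sol : ridp_solution e s t req P).

Let adj_overlap u v : u != v -> e u v = overlap l r u v.
Proof. by case: lr_rep => _ _ _ _; apply. Qed.

Lemma meets_joined_end a x y : joins (P a) x y -> inner (P a) != [::] ->
  meets_vertex l r (P a) x.
Proof.
have [[e_irr e_sym] [gp _ _ _]] := (e_simple, sol).
move=> ja /(joins_adj_inner e_sym (gp a) ja)[u u_in e_xu]; exists u => //.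
have x_neq_u : x != u by apply: contraTneq e_xu => ->; rewrite e_irr.
by rewrite (adj_overlap x_neq_u) overlapC in e_xu.
Qed.

Lemma not_meets_foreign a b v : a != b -> v \in P b -> ~~ is_end (P a) v ->
  ~ meets_vertex l r (P a) v.
Proof.
case: sol => _ _ [_ shared adj] _ ab v_b not_end [u u_in uv].
have [u_eq_v|u_neq_v] := eqVneq u v.
  by move: (shared a b ab u (mem_inner u_in)); rewrite u_eq_v (negbTE not_end) => /(_ v_b).
by move: (adj a b ab u v u_in v_b); rewrite adj_overlap // /overlap uv (negbTE not_end) => /(_ isT).
Qed.

Lemma inner_spans_disjoint a b : a != b -> ~ meets_union l r (P a) (P b).
Proof.
case: sol => gp _ [_ shared _] _ ab [u [w [u_in w_in uw]]].
have w_not_end : ~~ is_end (P a) w.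
  apply/negP => w_end; move/negP: (inner_not_end (gpath_uniq (gp b)) w_in); apply.
  by case/andP: (shared a b ab w (mem_end w_end) (mem_inner w_in)).
exact: (not_meets_foreign ab (mem_inner w_in) w_not_end) (ex_intro2 _ _ u u_in uw).
Qed.

Lemma exists_joining_path j : exists b, joins (P b) (s j) (t j).
Proof.
case: inst sol => _ _ req_gt0 [_ _ _ card].
have : (0 < #|[set b | joins (P b) (s j) (t j)]|)%N by rewrite card.
by case/card_gt0P => b; rewrite inE; exists b.
Qed.

Lemma meets_no_other_terminal i a v : joins (P a) (s i) (t i) ->
  terminal_vertex s t v -> v != s i -> v != t i -> ~ meets_vertex l r (P a) v.
Proof.
case: inst => _ distinct _ ja [j v_j] v_si v_ti.
have i_neq_j : i != j.
  by apply/eqP => i_eq_j; case: v_j => v_eq; rewrite v_eq i_eq_j eqxx in v_si v_ti.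
have [b jb] := exists_joining_path j.
have a_neq_b : a != b.
  apply/eqP => a_eq_b; rewrite -a_eq_b in jb.
  by move: (distinct i j i_neq_j); rewrite (joins_ends_eq ja jb).
apply: (not_meets_foreign a_neq_b).
  by case/andP: (joins_is_end jb) => /mem_end ? /mem_end ?; case: v_j => ->.
by apply/negP => /(joins_endP ja)[] v_eq; rewrite v_eq eqxx in v_si v_ti.
Qed.

Lemma no_span_between i j a b c : i != j ->
    joins (P a) (s i) (t i) -> joins (P b) (s i) (t i) -> joins (P c) (s j) (t j) ->
    inner (P a) != [::] -> inner (P b) != [::] -> inner (P c) != [::] ->
  ~ lies_between l r (P a) (P c) (P b).
Proof.
case: inst => s_neq_t distinct _ i_neq_j ja jb jc a_inner b_inner c_inner [a_c c_b].
have [x x_i /andP[x_sj x_tj]] := exists_private_end (s_neq_t i) (distinct i j i_neq_j).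
have meets_x d : joins (P d) (s i) (t i) -> inner (P d) != [::] ->
    meets_vertex l r (P d) x.
  by case: x_i => -> jd; [|rewrite joinsC in jd]; apply: meets_joined_end jd.
have [ua ua_in ua_x] := meets_x a ja a_inner.
have [ub ub_in ub_x] := meets_x b jb b_inner.
have [w w_in] : exists w, w \in inner (P c).
  by case: (inner (P c)) c_inner => // w q _; exists w; rewrite mem_head.
apply: (meets_no_other_terminal jc _ x_sj x_tj); first by exists i.
exists w => //; apply: overlap_between ua_x ub_x (a_c _ _ ua_in w_in) _ (c_b _ _ w_in ub_in).
by case: lr_rep.
Qed.

End Solution.

Unset Implicit Arguments.

Theorem lemma1 (V : finType) (e : rel V) (l r : V -> int)
    (k : nat) (s t : 'I_k -> V) (req : 'I_k -> nat)
    (P : 'I_(\sum_(i < k) req i)%N -> seq V) :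
  simple_graph e -> interval_rep e l r ->
  ridp_instance s t req -> ridp_solution e s t req P ->
  [/\ (forall (i : 'I_k) a, joins (P a) (s i) (t i) -> inner (P a) != [::] ->
         [/\ meets_vertex l r (P a) (s i), meets_vertex l r (P a) (t i) &
             forall v, terminal_vertex s t v -> v != s i -> v != t i ->
               ~ meets_vertex l r (P a) v]),
      (forall a b, a != b -> inner (P a) != [::] -> inner (P b) != [::] ->
         ~ meets_union l r (P a) (P b)) &
      (forall (i j : 'I_k), i != j -> forall a b c,
         joins (P a) (s i) (t i) -> joins (P b) (s i) (t i) ->
         joins (P c) (s j) (t j) ->
         inner (P a) != [::] -> inner (P b) != [::] -> inner (P c) != [::] ->
         ~ lies_between l r (P a) (P c) (P b))].
Proof.
move=> e_simple lr_rep inst sol; split.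
- move=> i a ja a_inner; split.
  + exact: (meets_joined_end e_simple lr_rep sol ja a_inner).
  + rewrite joinsC in ja.
    exact: (meets_joined_end e_simple lr_rep sol ja a_inner).
  + by move=> v; apply: (meets_no_other_terminal lr_rep inst sol ja).
- by move=> a b a_neq_b _ _; apply: (inner_spans_disjoint lr_rep sol a_neq_b).
- move=> i j i_neq_j a b c.
  exact: (no_span_between e_simple lr_rep inst sol i_neq_j).
Qed.
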